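(* Let $A$ be an associative unital algebra and $(H,\pi_l,\pi_r,\psi_l,\psi_r)$ an L-R-twisting datum for $A$, where $H$ is a Hopf algebra with bijective antipode $S$. Define $\pi:(H\otimes H^{op})\otimes A\to A$, $\pi(h\otimes h'\otimes a)=h\cdot a\cdot h'$, and $\psi:A\to(H\otimes H^{op})\otimes A$, $\psi(a)=(a_{\{-1\}}\otimes S^{-1}(a_{\{1\}}))\otimes a_{\{0\}}$. Then $(H\otimes H^{op},\pi,\psi)$ is a left twisting datum for $A$, and the map $\lambda:(A,\bullet)\to(A,\star)$, $\lambda(a)=a_{<0>}\cdot S^{-1}(a_{<1>})$, is an algebra isomorphism with inverse $\lambda^{-1}(a)=a_{<0>}\cdot a_{<1>}$.
   Context: Work over a field $k$. An L-R-twisting datum for an algebra $A$: $H$-bimodule algebra structure on $A$ (actions $h\cdot a$, $a\cdot h$, with $h\cdot(ab)=(h_1\cdot a)(h_2\cdot b)$, $(ab)\cdot h=(a\cdot h_1)(b\cdot h_2)$, $h\cdot1=1\cdot h=\varepsilon(h)1$), $H$-bicomodule algebra structure on $A$ (algebra maps $\psi_l(a)=a_{[-1]}\otimes a_{[0]}$, $\psi_r(a)=a_{<0>}\otimes a_{<1>}$ forming an $H$-bicomodule), and compatibilities $(h\cdot a)_{[-1]}\otimes(h\cdot a)_{[0]}=a_{[-1]}\otimes h\cdot a_{[0]}$, $(h\cdot a)_{<0>}\otimes(h\cdot a)_{<1>}=h\cdot a_{<0>}\otimes a_{<1>}$, $(a\cdot h)_{[-1]}\otimes(a\cdot h)_{[0]}=a_{[-1]}\otimes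 a_{[0]}\cdot h$, $(a\cdot h)_{<0>}\otimes(a\cdot h)_{<1>}=a_{<0>}\cdot h\otimes a_{<1>}$. The L-R-twisted product is $a\bullet b=(a_{[0]}\cdot b_{<1>})(a_{[-1]}\cdot b_{<0>})$. Notation $a_{\{-1\}}\otimes a_{\{0\}}\otimes a_{\{1\}}=a_{<0>_{[-1]}}\otimes a_{<0>_{[0]}}\otimes a_{<1>}=a_{[-1]}\otimes a_{[0]_{<0>}}\otimes a_{[0]_{<1>}}$. A left twisting datum $(K,\pi,\psi)$ for $A$ ($K$ a bialgebra): $A$ is a left $K$-module algebra ($k\cdot a$) and left $K$-comodule algebra ($a\mapsto a_{(-1)}\otimes a_{(0)}$) with $(k\cdot a)_{(-1)}\otimes(k\cdot a)_{(0)}=a_{(-1)}\otimes k\cdot a_{(0)}$; the left twisted product is $a\star b=a_{(0)}(a_{(-1)}\cdot b)$. Here $\star$ is the left twisted product for $(H\otimes H^{op},\pi,\psi)$. *)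

(* Tensors are encoded Sweedler-style as finite lists of
   pure tensors; two such lists are equal as tensors iff all multilinear
   forms (into the base field k) agree on them -- over a field this is
   exactly equality in the algebraic tensor product. *)
From HB Require Import structures.
From mathcomp Require Import all_boot all_order all_algebra.
Set Implicit Arguments. Unset Strict Implicit. Unset Printing Implicit Defensive.
Import GRing.Theory.
Local Open Scope ring_scope.

Section Tensors.
Variable k : fieldType.

Definition lin (V : lmodType k) (g : V -> k) :=
  forall (c : k) (x y : V), g (c *: x + y) = c * g x + g y.

Definition ml2 (V W : lmodType k) (f : V -> W -> k) :=
  (forall w, lin (fun v => f v w)) /\ (forall v, lin (fun w => f v w)).

Definition ml3 (V W U : lmodType k) (f : V -> W -> U -> k) :=
  [/\ (forall w u, lin (fun v => f v w u)),
      (forall v u, lin (fun w => f v w u)) &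
      (forall v w, lin (fun u => f v w u))].

Definition ml5 (V1 V2 V3 V4 V5 : lmodType k)
    (f : V1 -> V2 -> V3 -> V4 -> V5 -> k) :=
  [/\ (forall x2 x3 x4 x5, lin (fun x1 => f x1 x2 x3 x4 x5)),
      (forall x1 x3 x4 x5, lin (fun x2 => f x1 x2 x3 x4 x5)),
      (forall x1 x2 x4 x5, lin (fun x3 => f x1 x2 x3 x4 x5)),
      (forall x1 x2 x3 x5, lin (fun x4 => f x1 x2 x3 x4 x5)) &
      (forall x1 x2 x3 x4, lin (fun x5 => f x1 x2 x3 x4 x5))].

Definition teq2 (V W : lmodType k) (s t : seq (V * W)) :=
  forall f : V -> W -> k, ml2 f ->
    \sum_(p <- s) f p.1 p.2 = \sum_(p <- t) f p.1 p.2.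

Definition teq3 (V W U : lmodType k) (s t : seq ((V * W) * U)) :=
  forall f : V -> W -> U -> k, ml3 f ->
    \sum_(p <- s) f p.1.1 p.1.2 p.2 = \sum_(p <- t) f p.1.1 p.1.2 p.2.

Definition teq5 (V1 V2 V3 V4 V5 : lmodType k)
    (s t : seq (((V1 * V2) * (V3 * V4)) * V5)) :=
  forall f : V1 -> V2 -> V3 -> V4 -> V5 -> k, ml5 f ->
    \sum_(p <- s) f p.1.1.1 p.1.1.2 p.1.2.1 p.1.2.2 p.2
    = \sum_(p <- t) f p.1.1.1 p.1.1.2 p.1.2.1 p.1.2.2 p.2.

Definition tmul (R1 R2 : algType k) (s t : seq (R1 * R2)) : seq (R1 * R2) :=
  [seq (p.1 * q.1, p.2 * q.2) | p <- s, q <- t].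

End Tensors.

Section Hopf.
Variables (k : fieldType) (H : algType k).
Variables (Delta : H -> seq (H * H)) (eps : H -> k) (S : H -> H).

Definition is_bialgebra :=
  [/\ [/\ lin eps, eps 1 = 1 & (forall x y, eps (x * y) = eps x * eps y)],
      (forall c x y, teq2 (Delta (c *: x + y))
                          ([seq (c *: p.1, p.2) | p <- Delta x] ++ Delta y)),
      teq2 (Delta 1) [:: (1, 1)] /\
      (forall x y, teq2 (Delta (x * y)) (tmul (Delta x) (Delta y))),
      (forall x, teq3 [seq ((q.1, q.2), p.2) | p <- Delta x, q <- Delta p.1]
                      [seq ((p.1, q.1), q.2) | p <- Delta x, q <- Delta p.2]) &
      (forall x, \sum_(p <- Delta x) eps p.1 *: p.2 = x /\
                 \sum_(p <- Delta x) eps p.2 *: p.1 = x)].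

Definition is_hopf :=
  [/\ is_bialgebra,
      (forall (c : k) x y, S (c *: x + y) = c *: S x + S y) &
      (forall x, \sum_(p <- Delta x) S p.1 * p.2 = eps x *: 1 /\
                 \sum_(p <- Delta x) p.1 * S p.2 = eps x *: 1)].
End Hopf.

Section LR.
Variables (k : fieldType) (H A : algType k).
Variables (Delta : H -> seq (H * H)) (eps : H -> k).
Variables (la : H -> A -> A) (ra : A -> H -> A).
Variables (psl : A -> seq (H * A)) (psr : A -> seq (A * H)).

(* A is an H-bimodule algebra: h . a = la h a,  a . h = ra a h *)
Definition bimodule_algebra :=
  [/\ (forall (c : k) h g a, la (c *: h + g) a = c *: la h a + la g a)
      /\ (forall (c : k) h a b, la h (c *: a + b) = c *: la h a + la h b),
      (forall (c : k) a h g, ra a (c *: h + g) = c *: ra a h + ra a g)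
      /\ (forall (c : k) h a b, ra (c *: a + b) h = c *: ra a h + ra b h),
      (forall a, la 1 a = a) /\ (forall h g a, la (h * g) a = la h (la g a)) /\
      (forall a, ra a 1 = a) /\ (forall h g a, ra a (h * g) = ra (ra a h) g),
      (forall h a g, la h (ra a g) = ra (la h a) g) /\
      (forall h a b, la h (a * b) = \sum_(p <- Delta h) la p.1 a * la p.2 b)
      /\ (forall h, la h 1 = eps h *: 1) &
      (forall h a b, ra (a * b) h = \sum_(p <- Delta h) ra a p.1 * ra b p.2)
      /\ (forall h, ra 1 h = eps h *: 1)].

(* A is an H-bicomodule algebra: psl a = a_[-1] (x) a_[0],
   psr a = a_<0> (x) a_<1> *)
Definition bicomodule_algebra :=
  [/\ (forall (c : k) a b, teq2 (psl (c *: a + b))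
                               ([seq (p.1, c *: p.2) | p <- psl a] ++ psl b))
      /\ (forall (c : k) a b, teq2 (psr (c *: a + b))
                               ([seq (c *: p.1, p.2) | p <- psr a] ++ psr b)),
      (forall a, teq3 [seq ((q.1, q.2), p.2) | p <- psl a, q <- Delta p.1]
                      [seq ((p.1, q.1), q.2) | p <- psl a, q <- psl p.2])
      /\ (forall a, \sum_(p <- psl a) eps p.1 *: p.2 = a),
      (forall a, teq3 [seq ((q.1, q.2), p.2) | p <- psr a, q <- psr p.1]
                      [seq ((p.1, q.1), q.2) | p <- psr a, q <- Delta p.2])
      /\ (forall a, \sum_(p <- psr a) eps p.2 *: p.1 = a),
      (forall a, teq3 [seq ((q.1, q.2), p.2) | p <- psr a, q <- psl p.1]
                      [seq ((p.1, q.1), q.2) | p <- psl a, q <- psr p.2]) /\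
      (forall a b, teq2 (psl (a * b)) (tmul (psl a) (psl b)))
      /\ teq2 (psl 1) [:: (1, 1)] &
      (forall a b, teq2 (psr (a * b)) (tmul (psr a) (psr b)))
      /\ teq2 (psr 1) [:: (1, 1)]].

Definition LR_twisting_datum :=
  [/\ bimodule_algebra, bicomodule_algebra,
      (forall h a, teq2 (psl (la h a)) [seq (p.1, la h p.2) | p <- psl a]) /\
      (forall h a, teq2 (psr (la h a)) [seq (la h p.1, p.2) | p <- psr a]) &
      (forall h a, teq2 (psl (ra a h)) [seq (p.1, ra p.2 h) | p <- psl a]) /\
      (forall h a, teq2 (psr (ra a h)) [seq (ra p.1 h, p.2) | p <- psr a])].

Definition LRprod (a b : A) : A :=
  \sum_(p <- psl a) \sum_(q <- psr b) ra p.2 q.2 * la p.1 q.1.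
End LR.

(* The bialgebra K = H (x) H^op, elements encoded as formal sums
   (lists) of pure tensors h (x) h'. *)
Section HHop.
Variables (k : fieldType) (H A : algType k).
Variables (Delta : H -> seq (H * H)) (eps : H -> k).

Definition Kmul (x y : seq (H * H)) : seq (H * H) :=
  [seq (p.1 * q.1, q.2 * p.2) | p <- x, q <- y].
Definition Kone : seq (H * H) := [:: (1, 1)].
Definition KDelta (x : seq (H * H)) : seq ((H * H) * (H * H)) :=
  flatten [seq [seq ((q.1, r.1), (q.2, r.2)) | q <- Delta p.1, r <- Delta p.2]
          | p <- x].
Definition Keps (x : seq (H * H)) : k := \sum_(p <- x) eps p.1 * eps p.2.

Variables (pi : seq (H * H) -> A -> A) (psi : A -> seq ((H * H) * A)).

Definition left_twisting_datum_HHop :=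
  [/\
      (forall x y a, teq2 x y -> pi x a = pi y a)
      /\ (forall x (c : k) a b, pi x (c *: a + b) = c *: pi x a + pi x b)
      /\ (forall x y (c : k) a,
             pi ([seq (c *: p.1, p.2) | p <- x] ++ y) a = c *: pi x a + pi y a),
      (forall x y a, pi (Kmul x y) a = pi x (pi y a))
      /\ (forall a, pi Kone a = a) /\
      (forall x a b, pi x (a * b) =
                     \sum_(p <- KDelta x) pi [:: p.1] a * pi [:: p.2] b)
      /\ (forall x, pi x 1 = Keps x *: 1),
      (forall (c : k) a b, teq3 (psi (c *: a + b))
                                ([seq (p.1, c *: p.2) | p <- psi a] ++ psi b))
      /\ (forall a, teq5 [seq (q, p.2) | p <- psi a, q <- KDelta [:: p.1]]
                         [seq ((p.1, q.1), q.2) | p <- psi a, q <- psi p.2])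
      /\ (forall a, \sum_(p <- psi a) Keps [:: p.1] *: p.2 = a),
      (forall a b, teq3 (psi (a * b))
                        [seq ((p.1.1 * q.1.1, q.1.2 * p.1.2), p.2 * q.2)
                        | p <- psi a, q <- psi b])
      /\ teq3 (psi 1) [:: ((1, 1), 1)] &
      (forall x a, teq3 (psi (pi x a)) [seq (p.1, pi x p.2) | p <- psi a])].

Definition Lprod (a b : A) : A := \sum_(p <- psi a) p.2 * pi [:: p.1] b.
End HHop.

Section Construction.
Variables (k : fieldType) (H A : algType k) (Sinv : H -> H).
Variables (la : H -> A -> A) (ra : A -> H -> A).
Variables (psl : A -> seq (H * A)) (psr : A -> seq (A * H)).

Definition piLR (x : seq (H * H)) (a : A) : A :=
  \sum_(p <- x) la p.1 (ra a p.2).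

(* psi a = (a_{-1} (x) S^{-1}(a_{1})) (x) a_{0},
   with a_{-1} (x) a_{0} (x) a_{1} = a_[-1] (x) a_[0]<0> (x) a_[0]<1> *)
Definition psiLR (a : A) : seq ((H * H) * A) :=
  [seq ((p.1, Sinv q.2), q.1) | p <- psl a, q <- psr p.2].

Definition lambdaLR (a : A) : A := \sum_(p <- psr a) ra p.1 (Sinv p.2).
Definition lambdaLR_inv (a : A) : A := \sum_(p <- psr a) ra p.1 p.2.
End Construction.

From HB Require Import structures.
From mathcomp Require Import all_boot all_order all_algebra.
From mathcomp Require Import boolp classical_sets.
From mathcomp Require Import ring.
Set Implicit Arguments. Unset Strict Implicit. Unset Printing Implicit Defensive.
Import GRing.Theory.
Local Open Scope ring_scope.

(* Every identity is proved by applying an arbitrary linear functional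
   [g : A -> k] (or [H -> k]) to both sides: linear functionals separate the
   points of a vector space (Zorn's lemma), and [g] turns both sides into
   scalar sums over Sweedler lists.  These are sums of multilinear forms, so
   the axioms of the Hopf algebra and of the L-R-twisting datum, which are
   identities of tensors tested against multilinear forms, rewrite them.  The
   computations are the paper's: [psi] is coassociative because of the
   compatibility [a_<0>_[-1] (x) a_<0>_[0] (x) a_<1> = a_[-1] (x) a_[0]_<0>
   (x) a_[0]_<1>] and the anti-comultiplicativity of [S^-1]; [lambda] and
   [a |-> a_<0> . a_<1>] are inverse because [S^-1] is an antipode of the
   co-opposite bialgebra; and [lambda] is multiplicative by expanding both
   products and contracting [x_(2) S^-1(x_(1)) = eps x] once. *)

Section FunctionalSeparation.
Local Open Scope classical_set_scope.
Variables (k : fieldType) (V : lmodType k) (v : V).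
Hypothesis v_neq0 : v != 0.

Definition functional_graph (G : set (V * k)) :=
  [/\ G (v, 1), (forall x a b, G (x, a) -> G (x, b) -> a = b) &
      (forall c x a y b, G (x, a) -> G (y, b) -> G (c *: x + y, c * a + b))].

Lemma functional_graph0 G : functional_graph G -> G (0, 0).
Proof.
case=> Gv _ Gc; have := Gc (-1) _ _ _ _ Gv Gv.
by rewrite scaleN1r addNr mulN1r addNr.
Qed.

Definition empty_or_functional_graph (G : set (V * k)) :=
  G = set0 \/ functional_graph G.

Lemma bigcup_chain_functional_graph (F : set (set (V * k))) :
  F `<=` empty_or_functional_graph -> total_on F subset ->
  empty_or_functional_graph (\bigcup_(X in F) X).
Proof.
move=> FP Ftot.
have [[z [X FX Xz]]|nz] := pselect (exists z, (\bigcup_(X in F) X) z); last first.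
  left; apply/seteqP; split => // z Uz; exfalso; apply: nz; by exists z.
right.
have goodF Y : F Y -> (exists u, Y u) -> functional_graph Y.
  move=> FY [u Yu]; case: (FP Y FY) => // Y0; by rewrite Y0 in Yu.
have gX : functional_graph X by apply: goodF => //; exists z.
have two Y1 Y2 u1 u2 : F Y1 -> F Y2 -> Y1 u1 -> Y2 u2 ->
    exists Y, [/\ F Y, functional_graph Y, Y u1 & Y u2].
  move=> F1 F2 Y1u Y2u; case: (Ftot _ _ F1 F2) => sub.
  - by exists Y2; split => //; [apply: goodF => //; exists u2| exact: sub].
  - by exists Y1; split => //; [apply: goodF => //; exists u1| exact: sub].
split.
- by exists X => //; case: gX.
- move=> x a b [Y1 F1 Y1a] [Y2 F2 Y2b].
  have [Y [_ [_ fY _] Ya Yb]] := two _ _ _ _ F1 F2 Y1a Y2b; exact: fY Ya Yb.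
- move=> c x a y b [Y1 F1 Y1a] [Y2 F2 Y2b].
  have [Y [FY [_ _ cY] Ya Yb]] := two _ _ _ _ F1 F2 Y1a Y2b.
  by exists Y => //; apply: cY Ya Yb.
Qed.

(* Otherwise [M] extends to the graph of [m + c x |-> M m], with [x] outside its domain. *)
Lemma maximal_functional_graph_total (M : set (V * k)) :
  functional_graph M ->
  (forall B, M `<` B -> ~ empty_or_functional_graph B) ->
  forall x, exists a, M (x, a).
Proof.
move=> gM Mmax x; apply: contrapT => nx.
have nM a : ~ M (x, a) by move=> Ma; apply: nx; exists a.
pose B := fun p : V * k => exists m a c, M (m, a) /\ p = (m + c *: x, a).
apply: (Mmax B); last first.
  right; have [Mv fM cM] := gM; split.
  - by exists v, 1, 0; rewrite scale0r addr0.
  - move=> y a b [m1 [a1 [c1 [M1 [e1 ->]]]]] [m2 [a2 [c2 [M2 [e2 ->]]]]].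
    have [ec|nec] := eqVneq c1 c2.
      rewrite -ec e1 in e2; move/addIr: e2 => em.
      by rewrite em in M1; apply: fM M1 M2.
    exfalso; apply: (nM ((c1 - c2)^-1 * (a2 - a1) + 0)).
    have M21 := cM (-1) _ _ _ _ M1 M2.
    have := cM ((c1 - c2)^-1) _ _ _ _ M21 (functional_graph0 gM).
    rewrite scaleN1r mulN1r (addrC (- m1)) (addrC (- a1)) addr0.
    suff -> : (c1 - c2)^-1 *: (m2 - m1) = x by [].
    have -> : m2 - m1 = (c1 - c2) *: x.
      rewrite scalerBl; apply/eqP; rewrite subr_eq; apply/eqP; apply: (addIr (c2 *: x)).
      by rewrite -e2 e1 addrAC subrK addrC.
    by rewrite scalerA mulVf ?scale1r // subr_eq0.
  - move=> c y a z b [m1 [a1 [c1 [M1 [-> ->]]]]] [m2 [a2 [c2 [M2 [-> ->]]]]].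
    exists (c *: m1 + m2), (c * a1 + a2), (c * c1 + c2); split; first exact: cM.
    by congr (_, _); rewrite scalerDr scalerA scalerDl addrACA.
split.
- by move=> [m a] Ma; exists m, a, 0; rewrite scale0r addr0.
- move=> /(_ (x, 0)) h; apply: (nM 0); apply: h.
  by exists 0, 0, 1; split; [exact: functional_graph0 | rewrite add0r scale1r].
Qed.

Lemma exists_functional1 : exists g : V -> k, lin g /\ g v = 1.
Proof.
have [M [PM Mmax]] : exists M, empty_or_functional_graph M /\
    forall B, M `<` B -> ~ empty_or_functional_graph B.
  exact: Zorn_bigcup bigcup_chain_functional_graph.
have gM : functional_graph M.
  case: PM => // M0; exfalso.
  pose G0 := fun p : V * k => exists c, p = (c *: v, c).
  apply: (Mmax G0); last first.
    right; split.
    - by exists 1; rewrite scale1r.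
    - move=> x a b [c1 [-> ->]] [c2 [e ->]].
      move/eqP: e; rewrite -subr_eq0 -scalerBl scaler_eq0 (negbTE v_neq0) orbF.
      by rewrite subr_eq0 => /eqP.
    - move=> c x a y b [c1 [-> ->]] [c2 [-> ->]].
      by exists (c * c1 + c2); rewrite scalerDl scalerA.
  rewrite M0; split; first by [].
  by move=> /(_ (v, 1)); apply; exists 1; rewrite scale1r.
have tot := maximal_functional_graph_total gM Mmax.
pose g x := projT1 (cid (tot x)).
have gP x : M (x, g x) by rewrite /g; case: cid.
exists g; case: gM => Mv fM cM; split.
- move=> c x y; apply: fM (gP _) _; exact: cM.
- exact: fM (gP _) Mv.
Qed.
End FunctionalSeparation.

Section Multilinear.
Variable k : fieldType.

Lemma linD (V : lmodType k) (g : V -> k) x y : lin g -> g (x + y) = g x + g y.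
Proof. by move=> hg; have := hg 1 x y; rewrite scale1r mul1r. Qed.

Lemma lin0 (V : lmodType k) (g : V -> k) : lin g -> g 0 = 0.
Proof. by move=> hg; apply: (addIr (g 0)); rewrite -linD // !addr0 add0r. Qed.

Lemma linZ (V : lmodType k) (g : V -> k) c x : lin g -> g (c *: x) = c * g x.
Proof. by move=> hg; rewrite -[c *: x]addr0 hg (lin0 hg) addr0. Qed.

Lemma lin_sum (V : lmodType k) (g : V -> k) I (s : seq I) (X : I -> V) :
  lin g -> g (\sum_(i <- s) X i) = \sum_(i <- s) g (X i).
Proof.
move=> hg; elim: s => [|i s IH]; first by rewrite !big_nil (lin0 hg).
by rewrite !big_cons (linD _ _ hg) IH.
Qed.

Lemma eq_by_functionals (V : lmodType k) (x y : V) :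
  (forall g : V -> k, lin g -> g x = g y) -> x = y.
Proof.
move=> h; apply/eqP; rewrite -subr_eq0; apply/negPn/negP => nz.
have [g [hg g1]] := exists_functional1 nz.
have := h g hg; move/eqP; rewrite -subr_eq0.
have -> : g x - g y = g (x - y) by rewrite -[x - y]addrC -scaleN1r hg mulN1r addrC.
by rewrite g1 oner_eq0.
Qed.

Definition linmap (V W : lmodType k) (g : V -> W) :=
  forall c x y, g (c *: x + y) = c *: g x + g y.

Lemma linmap0 (V W : lmodType k) (g : V -> W) : linmap g -> g 0 = 0.
Proof. by move=> hg; have := hg (-1) 0 0; rewrite !scaleN1r oppr0 addr0 addNr. Qed.

Lemma linmapZ (V W : lmodType k) (g : V -> W) c x : linmap g -> g (c *: x) = c *: g x.
Proof. by move=> hg; rewrite -[c *: x]addr0 hg linmap0 // addr0. Qed.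

Lemma linmap_sum (V W : lmodType k) (g : V -> W) I (s : seq I) (X : I -> V) :
  linmap g -> g (\sum_(i <- s) X i) = \sum_(i <- s) g (X i).
Proof.
move=> hg; elim: s => [|i s IH]; first by rewrite !big_nil linmap0.
by rewrite !big_cons -[X i]scale1r hg !scale1r IH.
Qed.

(* Uncurried multilinear forms, the shape in which sums over Sweedler lists occur. *)
Definition bilin (V W : lmodType k) (F : V * W -> k) :=
  (forall w, lin (fun v => F (v, w))) /\ (forall v, lin (fun w => F (v, w))).

Definition trilin (V W U : lmodType k) (F : (V * W) * U -> k) :=
  [/\ (forall w u, lin (fun v => F ((v, w), u))),
      (forall v u, lin (fun w => F ((v, w), u))) &
      (forall v w, lin (fun u => F ((v, w), u)))].

Lemma lin_sumr (V : lmodType k) I (s : seq I) (G : I -> V -> k) :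
  (forall i, lin (G i)) -> lin (fun v => \sum_(i <- s) G i v).
Proof.
move=> hG c x y; rewrite mulr_sumr -big_split /=; apply: eq_bigr => i _; exact: hG.
Qed.

Lemma lin_mull (V : lmodType k) (G : V -> k) a : lin G -> lin (fun v => a * G v).
Proof. by move=> hG c x y; rewrite hG; ring. Qed.

Lemma lin_mulr (V : lmodType k) (G : V -> k) a : lin G -> lin (fun v => G v * a).
Proof. by move=> hG c x y; rewrite hG; ring. Qed.

Lemma bilinZl (V W : lmodType k) (F : V * W -> k) c x y :
  bilin F -> F (c *: x, y) = c * F (x, y).
Proof. by case=> h1 _; exact: (linZ _ _ (h1 y)). Qed.

Lemma bilinZr (V W : lmodType k) (F : V * W -> k) c x y :
  bilin F -> F (x, c *: y) = c * F (x, y).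
Proof. by case=> _ h2; exact: (linZ _ _ (h2 x)). Qed.

Lemma bilin_suml (V W : lmodType k) (F : V * W -> k) I (s : seq I) (X : I -> V) w :
  bilin F -> \sum_(i <- s) F (X i, w) = F (\sum_(i <- s) X i, w).
Proof. by case=> h1 _; rewrite (lin_sum _ _ (h1 w)). Qed.

Lemma bilin_sumr (V W : lmodType k) (F : V * W -> k) I (s : seq I) (X : I -> W) v :
  bilin F -> \sum_(i <- s) F (v, X i) = F (v, \sum_(i <- s) X i).
Proof. by case=> _ h2; rewrite (lin_sum _ _ (h2 v)). Qed.

Lemma teq2_sum (V W : lmodType k) (s t : seq (V * W)) (F : V * W -> k) :
  teq2 s t -> bilin F -> \sum_(p <- s) F p = \sum_(p <- t) F p.
Proof.
move=> h [h1 h2].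
have e r : \sum_(p <- r) F p = \sum_(p <- r) (fun x y => F (x, y)) p.1 p.2.
  by apply: eq_bigr => -[].
by rewrite !e; exact: (h (fun x y => F (x, y)) (conj h1 h2)).
Qed.

Lemma teq3_sum (V W U : lmodType k) (s t : seq ((V * W) * U)) (F : (V * W) * U -> k) :
  teq3 s t -> trilin F -> \sum_(p <- s) F p = \sum_(p <- t) F p.
Proof.
move=> h [h1 h2 h3].
have e r : \sum_(p <- r) F p = \sum_(p <- r) (fun x y z => F ((x, y), z)) p.1.1 p.1.2 p.2.
  by apply: eq_bigr => -[[]].
by rewrite !e; exact: (h (fun x y z => F ((x, y), z)) (And3 h1 h2 h3)).
Qed.

End Multilinear.

Section LinearityRules.
Variable k : fieldType.

(* [solve_lin] discharges linearity side conditions: the hypotheses [lin f],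
   [ml2 f], ... in context are turned into rewrite rules [LinRule _] for
   arguments of the form [c *: x + y], every such argument is expanded, and
   [ring] closes the resulting identity.  The two hooks are redefined in the
   sections below to use the additivity laws of the structure maps there. *)
Definition LinRule (P : Prop) := P.
Definition Unpacked (P : Prop) := P.

Lemma LinRuleE (P : Prop) : LinRule P -> P. Proof. by []. Qed.

Lemma lin_rule (V : lmodType k) (g : V -> k) : lin g ->
  LinRule (forall c x y, g (c *: x + y) = c * g x + g y).
Proof. by []. Qed.

Lemma ml2_rule1 (V W : lmodType k) (f : V -> W -> k) : ml2 f ->
  LinRule (forall c x y w, f (c *: x + y) w = c * f x w + f y w).
Proof. by case=> h1 _ c x y w; exact: h1. Qed.
Lemma ml2_rule2 (V W : lmodType k) (f : V -> W -> k) : ml2 f ->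
  LinRule (forall c x y v, f v (c *: x + y) = c * f v x + f v y).
Proof. by case=> _ h2 c x y v; exact: h2. Qed.

Lemma bilin_rule1 (V W : lmodType k) (F : V * W -> k) : bilin F ->
  LinRule (forall c x y w, F (c *: x + y, w) = c * F (x, w) + F (y, w)).
Proof. by case=> h1 _ c x y w; exact: h1. Qed.
Lemma bilin_rule2 (V W : lmodType k) (F : V * W -> k) : bilin F ->
  LinRule (forall c x y v, F (v, c *: x + y) = c * F (v, x) + F (v, y)).
Proof. by case=> _ h2 c x y v; exact: h2. Qed.

Lemma ml3_rule1 (V W U : lmodType k) (f : V -> W -> U -> k) : ml3 f ->
  LinRule (forall c x y w u, f (c *: x + y) w u = c * f x w u + f y w u).
Proof. by case=> h1 _ _ c x y w u; exact: h1. Qed.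
Lemma ml3_rule2 (V W U : lmodType k) (f : V -> W -> U -> k) : ml3 f ->
  LinRule (forall c x y v u, f v (c *: x + y) u = c * f v x u + f v y u).
Proof. by case=> _ h2 _ c x y v u; exact: h2. Qed.
Lemma ml3_rule3 (V W U : lmodType k) (f : V -> W -> U -> k) : ml3 f ->
  LinRule (forall c x y v w, f v w (c *: x + y) = c * f v w x + f v w y).
Proof. by case=> _ _ h3 c x y v w; exact: h3. Qed.

Section ML5.
Variables (V1 V2 V3 V4 V5 : lmodType k) (f : V1 -> V2 -> V3 -> V4 -> V5 -> k).
Hypothesis hf : ml5 f.

Lemma ml5_rule1 : LinRule (forall c x y x2 x3 x4 x5,
  f (c *: x + y) x2 x3 x4 x5 = c * f x x2 x3 x4 x5 + f y x2 x3 x4 x5).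
Proof. by case: hf => h _ _ _ _ c x y x2 x3 x4 x5; exact: h. Qed.
Lemma ml5_rule2 : LinRule (forall c x y x1 x3 x4 x5,
  f x1 (c *: x + y) x3 x4 x5 = c * f x1 x x3 x4 x5 + f x1 y x3 x4 x5).
Proof. by case: hf => _ h _ _ _ c x y x1 x3 x4 x5; exact: h. Qed.
Lemma ml5_rule3 : LinRule (forall c x y x1 x2 x4 x5,
  f x1 x2 (c *: x + y) x4 x5 = c * f x1 x2 x x4 x5 + f x1 x2 y x4 x5).
Proof. by case: hf => _ _ h _ _ c x y x1 x2 x4 x5; exact: h. Qed.
Lemma ml5_rule4 : LinRule (forall c x y x1 x2 x3 x5,
  f x1 x2 x3 (c *: x + y) x5 = c * f x1 x2 x3 x x5 + f x1 x2 x3 y x5).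
Proof. by case: hf => _ _ _ h _ c x y x1 x2 x3 x5; exact: h. Qed.
Lemma ml5_rule5 : LinRule (forall c x y x1 x2 x3 x4,
  f x1 x2 x3 x4 (c *: x + y) = c * f x1 x2 x3 x4 x + f x1 x2 x3 x4 y).
Proof. by case: hf => _ _ _ _ h c x y x1 x2 x3 x4; exact: h. Qed.
End ML5.

Lemma ml3Z3 (V W U : lmodType k) (f : V -> W -> U -> k) c v w u :
  Unpacked (ml3 f) -> f v w (c *: u) = c * f v w u.
Proof. by case=> _ _ h3; exact: (linZ _ _ (h3 v w)). Qed.

Lemma ml3_sum3 (V W U : lmodType k) (f : V -> W -> U -> k) v w I (s : seq I) X :
  Unpacked (ml3 f) -> f v w (\sum_(i <- s) X i) = \sum_(i <- s) f v w (X i).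
Proof. by case=> _ _ h3; exact: (lin_sum _ _ (h3 v w)). Qed.

End LinearityRules.

Ltac unpack_lin := repeat match goal with
  | h : bilin ?F |- _ => have := bilin_rule1 h; have := bilin_rule2 h;
                      move: h => /(@id (Unpacked (bilin F))) h; move=> ? ?
  | h : ml2 ?f |- _ => have := ml2_rule1 h; have := ml2_rule2 h;
                      move: h => /(@id (Unpacked (ml2 f))) h; move=> ? ?
  | h : ml3 ?f |- _ => have := ml3_rule1 h; have := ml3_rule2 h; have := ml3_rule3 h;
                      move: h => /(@id (Unpacked (ml3 f))) h; move=> ? ? ?
  | h : ml5 ?f |- _ => have := ml5_rule1 h; have := ml5_rule2 h; have := ml5_rule3 h;
                      have := ml5_rule4 h; have := ml5_rule5 h;
                      move: h => /(@id (Unpacked (ml5 f))) h; move=> ? ? ? ? ?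
  | h : lin ?f |- _ =>
      lazymatch goal with
      | _ : LinRule (forall c x y, f (c *: x + y) = _) |- _ => fail
      | _ => have := lin_rule h; move=> ?
      end
  end.

Ltac lin_expand_hook := idtac.
Ltac lin_apply_hook := fail.
Ltac rewrite_lin_rules :=
  repeat match goal with h : LinRule _ |- _ => progress rewrite ?(LinRuleE h) end.
Ltac lin_expand := repeat progress (lin_expand_hook;
  rewrite ?mulrDl ?mulrDr -?scalerAl -?scalerAr; rewrite_lin_rules).
Ltac solve_lin := repeat (first [
   match goal with |- bilin _ => split end |
   match goal with |- trilin _ => split end |
   match goal with |- forall _, _ => intro end |
   progress simpl |
   match goal with |- linmap _ =>
     let c := fresh "c" in let x := fresh "x" in let y := fresh "y" in
     move=> c x y /=; lin_expand; done end |
   apply: lin_sumr | lin_apply_hook | apply: lin_mull | apply: lin_mulr |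
   let c := fresh "c" in let x := fresh "x" in let y := fresh "y" in
   move=> c x y /=; lin_expand; ring ]).

Ltac big_simp := rewrite ?big_allpairs_dep ?big_flatten ?big_map ?big_cat ?big_cons ?big_nil /=.

Section Antipode.
Variables (k : fieldType) (H : algType k).
Variables (Delta : H -> seq (H * H)) (eps : H -> k) (S Sinv : H -> H).
Hypothesis hopf : is_hopf Delta eps S.
Hypothesis SK : cancel S Sinv.
Hypothesis SiK : cancel Sinv S.

Implicit Types (F : H * H -> k).

Lemma eps_lin : lin eps. Proof. by case: hopf => -[[]]. Qed.
Lemma epsD c x y : eps (c *: x + y) = c * eps x + eps y. Proof. exact: eps_lin. Qed.
Lemma eps1 : eps 1 = 1. Proof. by case: hopf => -[[]]. Qed.
Lemma epsM x y : eps (x * y) = eps x * eps y. Proof. by case: hopf => -[[]]. Qed.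
Lemma SD c x y : S (c *: x + y) = c *: S x + S y. Proof. by case: hopf. Qed.
Lemma antipodel x : \sum_(p <- Delta x) S p.1 * p.2 = eps x *: 1.
Proof. by case: hopf => _ _ /(_ x) []. Qed.
Lemma antipoder x : \sum_(p <- Delta x) p.1 * S p.2 = eps x *: 1.
Proof. by case: hopf => _ _ /(_ x) []. Qed.

Lemma sum_DeltaD c x y F : bilin F ->
  \sum_(p <- Delta (c *: x + y)) F p = c * \sum_(p <- Delta x) F p + \sum_(p <- Delta y) F p.
Proof.
move=> hF; case: hopf => -[_ DL _ _ _] _ _.
rewrite (teq2_sum (DL c x y) hF) big_cat big_map mulr_sumr; congr (_ + _).
by apply: eq_bigr => -[p1 p2] _ /=; exact: bilinZl.
Qed.

Lemma sum_Delta1 F : bilin F -> \sum_(p <- Delta 1) F p = F (1, 1).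
Proof.
by move=> hF; case: hopf => -[_ _ [D1 _] _ _] _ _; rewrite (teq2_sum D1 hF) big_seq1.
Qed.

Lemma sum_DeltaM x y F : bilin F -> \sum_(p <- Delta (x * y)) F p =
  \sum_(p <- Delta x) \sum_(q <- Delta y) F (p.1 * q.1, p.2 * q.2).
Proof.
move=> hF; case: hopf => -[_ _ [_ DM] _ _] _ _.
by rewrite (teq2_sum (DM x y) hF) big_allpairs_dep.
Qed.

Lemma sum_Delta_coassoc x (F : (H * H) * H -> k) : trilin F ->
  \sum_(p <- Delta x) \sum_(q <- Delta p.1) F ((q.1, q.2), p.2) =
  \sum_(p <- Delta x) \sum_(q <- Delta p.2) F ((p.1, q.1), q.2).
Proof.
move=> hF; case: hopf => -[_ _ _ DC _] _ _.
by have := teq3_sum (DC x) hF; rewrite !big_allpairs_dep.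
Qed.

Lemma sum_Delta_counitl x (G : H -> k) : lin G ->
  \sum_(p <- Delta x) eps p.1 * G p.2 = G x.
Proof.
move=> hG; case: hopf => -[_ _ _ _ /(_ x) [cL _]] _ _.
by rewrite -[in RHS]cL (lin_sum _ _ hG); apply: eq_bigr => p _; rewrite linZ.
Qed.

Lemma sum_Delta_counitr x (G : H -> k) : lin G ->
  \sum_(p <- Delta x) eps p.2 * G p.1 = G x.
Proof.
move=> hG; case: hopf => -[_ _ _ _ /(_ x) [_ cR]] _ _.
by rewrite -[in RHS]cR (lin_sum _ _ hG); apply: eq_bigr => p _; rewrite linZ.
Qed.

Lemma SinvD c x y : Sinv (c *: x + y) = c *: Sinv x + Sinv y.
Proof. by apply: (can_inj SK); rewrite SD !SiK. Qed.

Lemma lin_Delta (V : lmodType k) (g : V -> H) F :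
  linmap g -> bilin F -> lin (fun v => \sum_(p <- Delta (g v)) F p).
Proof. by move=> hg hF c x y; rewrite hg sum_DeltaD. Qed.

Ltac lin_expand_hook ::= rewrite ?SD ?SinvD ?epsD.
Ltac lin_apply_hook ::= apply: lin_Delta.

Lemma epsS x : eps (S x) = eps x.
Proof.
have := congr1 eps (antipodel x).
rewrite (lin_sum _ _ eps_lin) (linZ _ _ eps_lin) eps1 mulr1 => <-.
under eq_bigr => p _ do rewrite epsM mulrC.
rewrite (sum_Delta_counitr x (G := fun y => eps (S y))) //; solve_lin.
Qed.

Lemma epsSinv x : eps (Sinv x) = eps x.
Proof. by rewrite -{2}(SiK x) epsS. Qed.

Lemma S1 : S 1 = 1.
Proof.
apply: eq_by_functionals => g hg.
have := congr1 g (antipodel 1); rewrite eps1 scale1r => <-.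
rewrite (lin_sum _ _ hg) (sum_Delta1 (F := fun p => g (S p.1 * p.2))) /= ?mulr1 //.
unpack_lin; solve_lin.
Qed.

Lemma Sinv1 : Sinv 1 = 1.
Proof. by rewrite -{1}S1 SK. Qed.

Lemma S_sum I (s : seq I) (X : I -> H) : S (\sum_(i <- s) X i) = \sum_(i <- s) S (X i).
Proof. by apply: linmap_sum => c x y; rewrite SD. Qed.

Lemma SZ c x : S (c *: x) = c *: S x.
Proof. by apply: linmapZ => c0 x0 y0; rewrite SD. Qed.

(* [S (x y)] and [S y S x] are both convolution inverses of the multiplication
   [H (x) H -> H]; [conv_SmS g x y] is [g] applied to the triple convolution
   [(S o m) * m * (m o (S (x) S) o flip)] at [x (x) y], which collapses to
   either of them. *)
Definition conv_SmS (g : H -> k) x y :=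
  \sum_(p <- Delta x) \sum_(a <- Delta p.2) \sum_(q <- Delta y) \sum_(b <- Delta q.2)
     g (S (p.1 * q.1) * (a.1 * b.1) * S b.2 * S a.2).

Lemma conv_SmS_Sflip (g : H -> k) x y : lin g -> conv_SmS g x y = g (S y * S x).
Proof.
move=> hg; unpack_lin; symmetry.
transitivity (\sum_(p <- Delta x) \sum_(q <- Delta y) eps p.1 * (eps q.1 * g (S q.2 * S p.2))).
  rewrite -(sum_Delta_counitl x (G := fun u => g (S y * S u))); last by solve_lin.
  apply: eq_bigr => p _; rewrite -mulr_sumr; congr (_ * _).
  by rewrite -(sum_Delta_counitl y (G := fun u => g (S u * S p.2))) //; solve_lin.
transitivity (\sum_(p <- Delta x) \sum_(q <- Delta y) \sum_(a <- Delta p.1) \sum_(b <- Delta q.1)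
   g (S (a.1 * b.1) * (a.2 * b.2) * S q.2 * S p.2)).
  apply: eq_bigr => p _; apply: eq_bigr => q _.
  rewrite -(sum_DeltaM _ _ (F := fun r => g (S r.1 * r.2 * S q.2 * S p.2))) /=; last by solve_lin.
  rewrite mulrA -epsM -(linZ _ _ hg) -(mul1r (S q.2 * S p.2)) scalerAl -(antipodel (p.1 * q.1)).
  rewrite !mulr_suml (lin_sum _ _ hg); apply: eq_bigr => r _; by rewrite mulrA.
transitivity (\sum_(p <- Delta x) \sum_(a <- Delta p.2) \sum_(q <- Delta y) \sum_(b <- Delta q.1)
   g (S (p.1 * b.1) * (a.1 * b.2) * S q.2 * S a.2)).
  under eq_bigr => p _ do rewrite exchange_big /=.
  rewrite (sum_Delta_coassoc x (F := fun t => \sum_(q <- Delta y) \sum_(b <- Delta q.1)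
     g (S (t.1.1 * b.1) * (t.1.2 * b.2) * S q.2 * S t.2))) //; solve_lin.
apply: eq_bigr => p _; apply: eq_bigr => a _.
rewrite (sum_Delta_coassoc y (F := fun t =>
   g (S (p.1 * t.1.1) * (a.1 * t.1.2) * S t.2 * S a.2))) //; solve_lin.
Qed.

Lemma conv_SmS_SM (g : H -> k) x y : lin g -> conv_SmS g x y = g (S (x * y)).
Proof.
move=> hg; unpack_lin.
transitivity (\sum_(p <- Delta x) \sum_(q <- Delta y) eps (p.2 * q.2) * g (S (p.1 * q.1))).
  apply: eq_bigr => p _; rewrite exchange_big /=; apply: eq_bigr => q _.
  have e a : \sum_(b <- Delta q.2) g (S (p.1 * q.1) * (a.1 * b.1) * S b.2 * S a.2)
     = eps q.2 * g (S (p.1 * q.1) * (a.1 * S a.2)).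
    rewrite -(linZ _ _ hg) -(lin_sum _ _ hg); congr (g _).
    rewrite -[in RHS](mulr1 a.1) scalerAr scalerAl scalerAr -(antipoder q.2).
    rewrite mulr_sumr mulr_suml mulr_sumr; apply: eq_bigr => b _.
    by rewrite !mulrA.
  under eq_bigr => a _ do rewrite e.
  rewrite -mulr_sumr -(lin_sum _ _ hg) -mulr_sumr antipoder -scalerAr mulr1 linZ //.
  rewrite epsM; ring.
rewrite -(sum_DeltaM _ _ (F := fun r => eps r.2 * g (S r.1))); last by solve_lin.
by rewrite (sum_Delta_counitr (x * y) (G := fun u => g (S u))) //; solve_lin.
Qed.

Lemma SM x y : S (x * y) = S y * S x.
Proof. by apply: eq_by_functionals => g hg; rewrite -conv_SmS_SM // conv_SmS_Sflip. Qed.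

Lemma SinvM x y : Sinv (x * y) = Sinv y * Sinv x.
Proof. by apply: (can_inj SK); rewrite SM !SiK. Qed.

Lemma sum_Delta0 F : bilin F -> \sum_(p <- Delta 0) F p = 0.
Proof.
move=> hF; have := sum_DeltaD 1 0 0 hF; rewrite scale1r addr0 mul1r => e.
by apply: (addrI (\sum_(p <- Delta 0) F p)); rewrite -e addr0.
Qed.

Lemma sum_DeltaZ c x F : bilin F ->
  \sum_(p <- Delta (c *: x)) F p = c * \sum_(p <- Delta x) F p.
Proof. by move=> hF; rewrite -[c *: x]addr0 sum_DeltaD // sum_Delta0 // addr0. Qed.

Lemma sum_Delta_sum I (s : seq I) (X : I -> H) F : bilin F ->
  \sum_(i <- s) \sum_(p <- Delta (X i)) F p = \sum_(p <- Delta (\sum_(i <- s) X i)) F p.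
Proof.
move=> hF; elim: s => [|i s IH]; first by rewrite !big_nil sum_Delta0.
by rewrite !big_cons IH -{2}(scale1r (X i)) sum_DeltaD // mul1r.
Qed.

Lemma eps_bilin_expand y u v F : bilin F -> eps y * F (u, v) =
  \sum_(a <- Delta y) \sum_(b <- Delta a.1) \sum_(c <- Delta a.2)
     F (u * (b.1 * S c.2), v * (b.2 * S c.1)).
Proof.
move=> hF; unpack_lin.
symmetry.
etransitivity.
  apply: (sum_Delta_coassoc y (F := fun t => \sum_(c <- Delta t.2)
   F (u * (t.1.1 * S c.2), v * (t.1.2 * S c.1)))); solve_lin.
rewrite /=.
etransitivity.
  apply: eq_bigr => a _; symmetry.
  apply: (sum_Delta_coassoc a.2 (F := fun t => F (u * (a.1 * S t.2), v * (t.1.1 * S t.1.2)))).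
  solve_lin.
rewrite /=.
transitivity (\sum_(a <- Delta y) \sum_(b <- Delta a.2) eps b.1 * F (u * (a.1 * S b.2), v)).
  apply: eq_bigr => a _; apply: eq_bigr => b _.
  rewrite (bilin_sumr _ (fun c : H * H => v * (c.1 * S c.2)) _ hF) -mulr_sumr antipoder.
  by rewrite -scalerAr mulr1 bilinZr.
transitivity (\sum_(a <- Delta y) F (u * (a.1 * S a.2), v)).
  apply: eq_bigr => a _.
  by rewrite (sum_Delta_counitl a.2 (G := fun h => F (u * (a.1 * S h), v))) //; solve_lin.
rewrite (bilin_suml _ (fun a : H * H => u * (a.1 * S a.2)) _ hF) -mulr_sumr antipoder.
by rewrite -scalerAr mulr1 bilinZl.
Qed.

Lemma sum_DeltaS x F : bilin F ->
  \sum_(r <- Delta (S x)) F r = \sum_(p <- Delta x) F (S p.2, S p.1).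
Proof.
move=> hF; unpack_lin.
transitivity (\sum_(p <- Delta x) \sum_(r <- Delta (S p.1)) eps p.2 * F r).
  rewrite -(sum_Delta_counitr x (G := fun h => \sum_(r <- Delta (S h)) F r)); last by solve_lin.
  by apply: eq_bigr => p _; rewrite mulr_sumr.
transitivity (\sum_(p <- Delta x) \sum_(a <- Delta p.2) \sum_(r <- Delta (S p.1))
   \sum_(b <- Delta a.1) \sum_(c <- Delta a.2) F ((r.1 * b.1) * S c.2, (r.2 * b.2) * S c.1)).
  apply: eq_bigr => p _; rewrite exchange_big /=.
  have -> : \sum_(r <- Delta (S p.1)) eps p.2 * F r =
     \sum_(r <- Delta (S p.1)) eps p.2 * F (r.1, r.2) by apply: eq_bigr => -[].
  apply: eq_bigr => r _; rewrite (eps_bilin_expand p.2 r.1 r.2 hF).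
  apply: eq_bigr => a _; apply: eq_bigr => b _; apply: eq_bigr => c _.
  by rewrite !mulrA.
transitivity (\sum_(p <- Delta x) \sum_(a <- Delta p.2) \sum_(t <- Delta (S p.1 * a.1))
   \sum_(c <- Delta a.2) F (t.1 * S c.2, t.2 * S c.1)).
  apply: eq_bigr => p _; apply: eq_bigr => a _; symmetry.
  apply: (sum_DeltaM _ _ (F := fun t => \sum_(c <- Delta a.2) F (t.1 * S c.2, t.2 * S c.1))).
  solve_lin.
transitivity (\sum_(p <- Delta x) \sum_(a <- Delta p.1) \sum_(t <- Delta (S a.1 * a.2))
   \sum_(c <- Delta p.2) F (t.1 * S c.2, t.2 * S c.1)).
  symmetry; apply: (sum_Delta_coassoc x (F := fun t => \sum_(r <- Delta (S t.1.1 * t.1.2))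
   \sum_(c <- Delta t.2) F (r.1 * S c.2, r.2 * S c.1))).
  solve_lin.
transitivity (\sum_(p <- Delta x) eps p.1 * \sum_(c <- Delta p.2) F (S c.2, S c.1)).
  apply: eq_bigr => p _.
  rewrite (sum_Delta_sum _ (fun a => S a.1 * a.2)); last by solve_lin.
  rewrite antipodel sum_DeltaZ; last by solve_lin.
  rewrite sum_Delta1 /=; last by solve_lin.
  by under eq_bigr => c _ do rewrite !mul1r.
by rewrite (sum_Delta_counitl x (G := fun h => \sum_(c <- Delta h) F (S c.2, S c.1))) //; solve_lin.
Qed.

Lemma sum_DeltaSinv x F : bilin F ->
  \sum_(r <- Delta (Sinv x)) F r = \sum_(p <- Delta x) F (Sinv p.2, Sinv p.1).
Proof.
move=> hF; unpack_lin.
rewrite -{2}(SiK x) (sum_DeltaS _ (F := fun p => F (Sinv p.2, Sinv p.1))); last by solve_lin.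
by apply: eq_bigr => -[p1 p2] _ /=; rewrite !SK.
Qed.

Lemma antipode_invl x : \sum_(p <- Delta x) p.2 * Sinv p.1 = eps x *: 1.
Proof.
apply: (can_inj SK); rewrite S_sum SZ S1 -antipoder.
by apply: eq_bigr => p _; rewrite SM SiK.
Qed.

Lemma antipode_invr x : \sum_(p <- Delta x) Sinv p.2 * p.1 = eps x *: 1.
Proof.
apply: (can_inj SK); rewrite S_sum SZ S1 -antipodel.
by apply: eq_bigr => p _; rewrite SM SiK.
Qed.

Section LRDatum.
Variables (A : algType k) (la : H -> A -> A) (ra : A -> H -> A).
Variables (psl : A -> seq (H * A)) (psr : A -> seq (A * H)).
Hypothesis LRd : LR_twisting_datum Delta eps la ra psl psr.

Lemma laDl c h g a : la (c *: h + g) a = c *: la h a + la g a.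
Proof. by case: LRd => -[[]]. Qed.
Lemma laDr c h a b : la h (c *: a + b) = c *: la h a + la h b.
Proof. by case: LRd => -[[]]. Qed.
Lemma raDr c a h g : ra a (c *: h + g) = c *: ra a h + ra a g.
Proof. by case: LRd => -[_ []]. Qed.
Lemma raDl c h a b : ra (c *: a + b) h = c *: ra a h + ra b h.
Proof. by case: LRd => -[_ []]. Qed.
Lemma la_act1 a : la 1 a = a. Proof. by case: LRd => -[_ _ []]. Qed.
Lemma la_actM h g a : la (h * g) a = la h (la g a). Proof. by case: LRd => -[_ _ [_ []]]. Qed.
Lemma ra_act1 a : ra a 1 = a. Proof. by case: LRd => -[_ _ [_ [_ []]]]. Qed.
Lemma ra_actM h g a : ra a (h * g) = ra (ra a h) g. Proof. by case: LRd => -[_ _ [_ [_ []]]]. Qed.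
Lemma la_ra h a g : la h (ra a g) = ra (la h a) g. Proof. by case: LRd => -[_ _ _ []]. Qed.
Lemma la_mul h a b : la h (a * b) = \sum_(p <- Delta h) la p.1 a * la p.2 b.
Proof. by case: LRd => -[_ _ _ [_ []]]. Qed.
Lemma la_one h : la h 1 = eps h *: 1. Proof. by case: LRd => -[_ _ _ [_ []]]. Qed.
Lemma ra_mul h a b : ra (a * b) h = \sum_(p <- Delta h) ra a p.1 * ra b p.2.
Proof. by case: LRd => -[_ _ _ _ []]. Qed.
Lemma ra_one h : ra 1 h = eps h *: 1. Proof. by case: LRd => -[_ _ _ _ []]. Qed.
Lemma psl_counit a : \sum_(p <- psl a) eps p.1 *: p.2 = a.
Proof. by case: LRd => _ [_ []]. Qed.
Lemma psr_counit a : \sum_(p <- psr a) eps p.2 *: p.1 = a.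
Proof. by case: LRd => _ [_ _ []]. Qed.

Lemma la_sumr I (s : seq I) X h : la h (\sum_(i <- s) X i) = \sum_(i <- s) la h (X i).
Proof. by apply: linmap_sum => c x y; rewrite laDr. Qed.
Lemma ra_suml I (s : seq I) X h : ra (\sum_(i <- s) X i) h = \sum_(i <- s) ra (X i) h.
Proof. by apply: (linmap_sum (g := ra^~ h)) => c x y; rewrite raDl. Qed.
Lemma ra_sumr I (s : seq I) X a : ra a (\sum_(i <- s) X i) = \sum_(i <- s) ra a (X i).
Proof. by apply: linmap_sum => c x y; rewrite raDr. Qed.
Lemma laZl c h a : la (c *: h) a = c *: la h a.
Proof. by apply: (linmapZ (g := la^~ a)) => c0 x y; rewrite laDl. Qed.
Lemma laZr c h a : la h (c *: a) = c *: la h a.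
Proof. by apply: linmapZ => c0 x y; rewrite laDr. Qed.
Lemma raZr c h a : ra a (c *: h) = c *: ra a h.
Proof. by apply: linmapZ => c0 x y; rewrite raDr. Qed.

Lemma sum_pslD c a b (F : H * A -> k) : bilin F ->
  \sum_(p <- psl (c *: a + b)) F p = c * \sum_(p <- psl a) F p + \sum_(p <- psl b) F p.
Proof.
move=> hF; case: LRd => _ [[PlL _] _ _ _ _] _ _.
rewrite (teq2_sum (PlL c a b) hF) big_cat big_map mulr_sumr; congr (_ + _).
by apply: eq_bigr => -[p1 p2] _ /=; exact: bilinZr.
Qed.

Lemma sum_psrD c a b (F : A * H -> k) : bilin F ->
  \sum_(p <- psr (c *: a + b)) F p = c * \sum_(p <- psr a) F p + \sum_(p <- psr b) F p.
Proof.
move=> hF; case: LRd => _ [[_ PrL] _ _ _ _] _ _.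
rewrite (teq2_sum (PrL c a b) hF) big_cat big_map mulr_sumr; congr (_ + _).
by apply: eq_bigr => -[p1 p2] _ /=; exact: bilinZl.
Qed.

Lemma sum_psl_coassoc a (F : (H * H) * A -> k) : trilin F ->
  \sum_(p <- psl a) \sum_(q <- Delta p.1) F ((q.1, q.2), p.2) =
  \sum_(p <- psl a) \sum_(q <- psl p.2) F ((p.1, q.1), q.2).
Proof.
move=> hF; case: LRd => _ [_ [PlC _] _ _ _] _ _.
by have := teq3_sum (PlC a) hF; rewrite !big_allpairs_dep.
Qed.

Lemma sum_psr_coassoc a (F : (A * H) * H -> k) : trilin F ->
  \sum_(p <- psr a) \sum_(q <- psr p.1) F ((q.1, q.2), p.2) =
  \sum_(p <- psr a) \sum_(q <- Delta p.2) F ((p.1, q.1), q.2).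
Proof.
move=> hF; case: LRd => _ [_ _ [PrC _] _ _] _ _.
by have := teq3_sum (PrC a) hF; rewrite !big_allpairs_dep.
Qed.

Lemma sum_bicomodule a (F : (H * A) * H -> k) : trilin F ->
  \sum_(p <- psr a) \sum_(q <- psl p.1) F ((q.1, q.2), p.2) =
  \sum_(p <- psl a) \sum_(q <- psr p.2) F ((p.1, q.1), q.2).
Proof.
move=> hF; case: LRd => _ [_ _ _ [BiC _] _] _ _.
by have := teq3_sum (BiC a) hF; rewrite !big_allpairs_dep.
Qed.

Lemma sum_psr_counit a (G : A -> k) : lin G -> \sum_(p <- psr a) eps p.2 * G p.1 = G a.
Proof.
move=> hG; rewrite -[in RHS](psr_counit a) (lin_sum _ _ hG).
by apply: eq_bigr => p _; rewrite linZ.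
Qed.

Lemma sum_pslM a b (F : H * A -> k) : bilin F -> \sum_(p <- psl (a * b)) F p =
  \sum_(p <- psl a) \sum_(q <- psl b) F (p.1 * q.1, p.2 * q.2).
Proof.
move=> hF; case: LRd => _ [_ _ _ [_ [PlM _]] _] _ _.
by rewrite (teq2_sum (PlM a b) hF) big_allpairs_dep.
Qed.

Lemma sum_psrM a b (F : A * H -> k) : bilin F -> \sum_(p <- psr (a * b)) F p =
  \sum_(p <- psr a) \sum_(q <- psr b) F (p.1 * q.1, p.2 * q.2).
Proof.
move=> hF; case: LRd => _ [_ _ _ _ [PrM _]] _ _.
by rewrite (teq2_sum (PrM a b) hF) big_allpairs_dep.
Qed.

Lemma sum_psl1 (F : H * A -> k) : bilin F -> \sum_(p <- psl 1) F p = F (1, 1).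
Proof.
move=> hF; case: LRd => _ [_ _ _ [_ [_ Pl1]] _] _ _.
by rewrite (teq2_sum Pl1 hF) big_seq1.
Qed.

Lemma sum_psr1 (F : A * H -> k) : bilin F -> \sum_(p <- psr 1) F p = F (1, 1).
Proof.
move=> hF; case: LRd => _ [_ _ _ _ [_ Pr1]] _ _.
by rewrite (teq2_sum Pr1 hF) big_seq1.
Qed.

Lemma sum_psl_la h a (F : H * A -> k) : bilin F ->
  \sum_(p <- psl (la h a)) F p = \sum_(p <- psl a) F (p.1, la h p.2).
Proof.
move=> hF; case: LRd => _ _ [Pl_la _] _.
by rewrite (teq2_sum (Pl_la h a) hF) big_map.
Qed.

Lemma sum_psr_la h a (F : A * H -> k) : bilin F ->
  \sum_(p <- psr (la h a)) F p = \sum_(p <- psr a) F (la h p.1, p.2).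
Proof.
move=> hF; case: LRd => _ _ [_ Pr_la] _.
by rewrite (teq2_sum (Pr_la h a) hF) big_map.
Qed.

Lemma sum_psl_ra h a (F : H * A -> k) : bilin F ->
  \sum_(p <- psl (ra a h)) F p = \sum_(p <- psl a) F (p.1, ra p.2 h).
Proof.
move=> hF; case: LRd => _ _ _ [Pl_ra _].
by rewrite (teq2_sum (Pl_ra h a) hF) big_map.
Qed.

Lemma sum_psr_ra h a (F : A * H -> k) : bilin F ->
  \sum_(p <- psr (ra a h)) F p = \sum_(p <- psr a) F (ra p.1 h, p.2).
Proof.
move=> hF; case: LRd => _ _ _ [_ Pr_ra].
by rewrite (teq2_sum (Pr_ra h a) hF) big_map.
Qed.

Lemma sum_psl_sum I (s : seq I) (X : I -> A) (F : H * A -> k) : bilin F ->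
  \sum_(i <- s) \sum_(p <- psl (X i)) F p = \sum_(p <- psl (\sum_(i <- s) X i)) F p.
Proof.
move=> hF; have psl0 : \sum_(p <- psl 0) F p = 0.
  have := sum_pslD 1 0 0 hF; rewrite scale1r addr0 mul1r => e.
  by apply: (addrI (\sum_(p <- psl 0) F p)); rewrite -e addr0.
elim: s => [|i s IH]; first by rewrite !big_nil psl0.
by rewrite !big_cons IH -{2}(scale1r (X i)) sum_pslD // mul1r.
Qed.

Lemma sum_psr_sum I (s : seq I) (X : I -> A) (F : A * H -> k) : bilin F ->
  \sum_(i <- s) \sum_(p <- psr (X i)) F p = \sum_(p <- psr (\sum_(i <- s) X i)) F p.
Proof.
move=> hF; have psr0 : \sum_(p <- psr 0) F p = 0.
  have := sum_psrD 1 0 0 hF; rewrite scale1r addr0 mul1r => e.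
  by apply: (addrI (\sum_(p <- psr 0) F p)); rewrite -e addr0.
elim: s => [|i s IH]; first by rewrite !big_nil psr0.
by rewrite !big_cons IH -{2}(scale1r (X i)) sum_psrD // mul1r.
Qed.

Lemma lin_psl (V : lmodType k) (g : V -> A) (F : H * A -> k) :
  linmap g -> bilin F -> lin (fun v => \sum_(p <- psl (g v)) F p).
Proof. by move=> hg hF c x y; rewrite hg sum_pslD. Qed.

Lemma lin_psr (V : lmodType k) (g : V -> A) (F : A * H -> k) :
  linmap g -> bilin F -> lin (fun v => \sum_(p <- psr (g v)) F p).
Proof. by move=> hg hF c x y; rewrite hg sum_psrD. Qed.

Ltac lin_expand_hook ::= rewrite ?laDl ?laDr ?raDr ?raDl ?SD ?SinvD ?epsD.
Ltac lin_apply_hook ::= first [apply: lin_Delta | apply: lin_psl | apply: lin_psr].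

Let pi := piLR la ra.
Let psi := psiLR Sinv psl psr.

Lemma pi_teq2 x y a : teq2 x y -> pi x a = pi y a.
Proof.
move=> hxy; apply: eq_by_functionals => g hg; unpack_lin.
rewrite /pi /piLR !(lin_sum _ _ hg).
apply: (teq2_sum hxy (F := fun p => g (la p.1 (ra a p.2)))); solve_lin.
Qed.

Lemma piDr x c a b : pi x (c *: a + b) = c *: pi x a + pi x b.
Proof.
rewrite /pi /piLR scaler_sumr -big_split; apply: eq_bigr => p _.
by rewrite raDl laDr.
Qed.

Lemma piDl x y c a :
  pi ([seq (c *: p.1, p.2) | p <- x] ++ y) a = c *: pi x a + pi y a.
Proof.
rewrite /pi /piLR big_cat big_map scaler_sumr; congr (_ + _).
by apply: eq_bigr => p _; rewrite laZl.
Qed.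

Lemma pi_actM x y a : pi (Kmul x y) a = pi x (pi y a).
Proof.
rewrite /pi /piLR /Kmul big_allpairs_dep; apply: eq_bigr => p _.
rewrite ra_suml la_sumr; apply: eq_bigr => q _.
by rewrite la_actM ra_actM la_ra.
Qed.

Lemma pi_act1 a : pi (@Kone k H) a = a.
Proof. by rewrite /pi /piLR /Kone big_seq1 ra_act1 la_act1. Qed.

Lemma pi_seq1 z a : pi [:: z] a = la z.1 (ra a z.2).
Proof. by rewrite /pi /piLR big_seq1. Qed.

Lemma pi_mul x a b :
  pi x (a * b) = \sum_(p <- KDelta Delta x) pi [:: p.1] a * pi [:: p.2] b.
Proof.
rewrite /pi /piLR /KDelta big_flatten big_map; apply: eq_bigr => p _.
rewrite big_allpairs_dep ra_mul la_sumr exchange_big /=; apply: eq_bigr => r _.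
by rewrite la_mul; apply: eq_bigr => q _; rewrite !big_seq1.
Qed.

Lemma pi_one x : pi x 1 = Keps eps x *: 1.
Proof.
rewrite /pi /piLR /Keps scaler_suml; apply: eq_bigr => p _.
by rewrite ra_one laZr la_one scalerA mulrC.
Qed.

Lemma psiD c a b :
  teq3 (psi (c *: a + b)) ([seq (p.1, c *: p.2) | p <- psi a] ++ psi b).
Proof.
move=> f hf; unpack_lin; rewrite /psi /psiLR; do 3 big_simp.
rewrite (sum_pslD _ _ _ (F := fun u => \sum_(w <- psr u.2) f u.1 (Sinv w.2) w.1)); last by solve_lin.
congr (_ + _); rewrite mulr_sumr; apply: eq_bigr => u _.
by rewrite mulr_sumr; apply: eq_bigr => w _; rewrite ml3Z3.
Qed.

Lemma psi_counit a : \sum_(p <- psi a) Keps eps [:: p.1] *: p.2 = a.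
Proof.
rewrite /psi /psiLR big_allpairs_dep -[in RHS](psl_counit a); apply: eq_bigr => u _.
rewrite -[in RHS](psr_counit u.2) scaler_sumr; apply: eq_bigr => w _.
by rewrite /Keps big_seq1 /= epsSinv scalerA.
Qed.

Lemma psi1 : teq3 (psi 1) [:: ((1, 1), 1)].
Proof.
move=> f hf; unpack_lin; rewrite /psi /psiLR; do 3 big_simp.
rewrite (sum_psl1 (F := fun u => \sum_(w <- psr u.2) f u.1 (Sinv w.2) w.1)) /=; last by solve_lin.
rewrite (sum_psr1 (F := fun w => f 1 (Sinv w.2) w.1)) /=; last by solve_lin.
by rewrite Sinv1 addr0.
Qed.

Lemma psiM a b : teq3 (psi (a * b))
  [seq ((p.1.1 * q.1.1, q.1.2 * p.1.2), p.2 * q.2) | p <- psi a, q <- psi b].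
Proof.
move=> f hf; unpack_lin; rewrite /psi /psiLR; do 3 big_simp.
rewrite (sum_pslM _ _ (F := fun u => \sum_(w <- psr u.2) f u.1 (Sinv w.2) w.1)) /=; last by solve_lin.
apply: eq_bigr => u _.
transitivity (\sum_(i <- psl b) \sum_(w <- psr u.2) \sum_(w' <- psr i.2)
   f (u.1 * i.1) (Sinv w'.2 * Sinv w.2) (w.1 * w'.1)).
  apply: eq_bigr => u' _.
  rewrite (sum_psrM _ _ (F := fun w => f (u.1 * u'.1) (Sinv w.2) w.1)) /=; last by solve_lin.
  by apply: eq_bigr => w _; apply: eq_bigr => w' _; rewrite SinvM.
under [in RHS]eq_bigr => w _ do rewrite big_allpairs_dep /=.
by rewrite exchange_big.
Qed.

Lemma psi_pi x a : teq3 (psi (pi x a)) [seq (p.1, pi x p.2) | p <- psi a].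
Proof.
move=> f hf; unpack_lin; rewrite /psi /psiLR; do 3 big_simp.
rewrite /pi /piLR -(sum_psl_sum _ (fun r => la r.1 (ra a r.2))
  (F := fun u => \sum_(w <- psr u.2) f u.1 (Sinv w.2) w.1)); last by solve_lin.
transitivity (\sum_(r <- x) \sum_(u <- psl a) \sum_(w <- psr u.2)
   f u.1 (Sinv w.2) (la r.1 (ra w.1 r.2))).
  apply: eq_bigr => r _.
  rewrite (sum_psl_la _ _ (F := fun u => \sum_(w <- psr u.2) f u.1 (Sinv w.2) w.1)) /=;
    last by solve_lin.
  rewrite (sum_psl_ra _ _ (F := fun u => \sum_(w <- psr (la r.1 u.2)) f u.1 (Sinv w.2) w.1)) /=;
    last by solve_lin.
  apply: eq_bigr => u _.
  rewrite (sum_psr_la _ _ (F := fun w => f u.1 (Sinv w.2) w.1)) /=; last by solve_lin.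
  by rewrite (sum_psr_ra _ _ (F := fun w => f u.1 (Sinv w.2) (la r.1 w.1))) /=; last by solve_lin.
rewrite exchange_big; apply: eq_bigr => u _; rewrite exchange_big; apply: eq_bigr => w _.
by rewrite ml3_sum3.
Qed.

Lemma psi_coassoc a :
  teq5 [seq (q, p.2) | p <- psi a, q <- KDelta Delta [:: p.1]]
       [seq ((p.1, q.1), q.2) | p <- psi a, q <- psi p.2].
Proof.
move=> f hf; unpack_lin; rewrite /psi /psiLR /KDelta; do 4 big_simp.
transitivity (\sum_(u <- psl a) \sum_(q <- Delta u.1) \sum_(w <- psr u.2) \sum_(d <- Delta w.2)
   f q.1 (Sinv d.2) q.2 (Sinv d.1) w.1).
  apply: eq_bigr => u _.
  under eq_bigr => w _ do rewrite cats0 big_allpairs_dep /=.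
  rewrite exchange_big; apply: eq_bigr => q _; apply: eq_bigr => w _.
  by rewrite (sum_DeltaSinv _ (F := fun r => f q.1 r.1 q.2 r.2 w.1)); last by solve_lin.
symmetry.
under eq_bigr => u _ do (under eq_bigr => w _ do rewrite big_allpairs_dep /=).
transitivity (\sum_(u <- psl a) \sum_(v <- psl u.2) \sum_(w <- psr v.2) \sum_(d <- Delta w.2)
   f u.1 (Sinv d.2) v.1 (Sinv d.1) w.1).
  apply: eq_bigr => u _.
  etransitivity.
    apply: (sum_bicomodule u.2 (F := fun t => \sum_(w' <- psr t.1.2)
       f u.1 (Sinv t.2) t.1.1 (Sinv w'.2) w'.1)); solve_lin.
  rewrite /=; apply: eq_bigr => v _.
  apply: (sum_psr_coassoc v.2 (F := fun t => f u.1 (Sinv t.2) v.1 (Sinv t.1.2) t.1.1)).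
  solve_lin.
symmetry.
apply: (sum_psl_coassoc a (F := fun t => \sum_(w <- psr t.2) \sum_(d <- Delta w.2)
   f t.1.1 (Sinv d.2) t.1.2 (Sinv d.1) w.1)); solve_lin.
Qed.

Lemma left_twisting_datum_piLR_psiLR : left_twisting_datum_HHop Delta eps pi psi.
Proof.
split.
- by split; [exact: pi_teq2 | split; [exact: piDr | exact: piDl]].
- by split; [exact: pi_actM | split; [exact: pi_act1 | split; [exact: pi_mul | exact: pi_one]]].
- by split; [exact: psiD | split; [exact: psi_coassoc | exact: psi_counit]].
- by split; [exact: psiM | exact: psi1].
- exact: psi_pi.
Qed.

Let lambda := lambdaLR Sinv ra psr.
Let lambda_inv := lambdaLR_inv ra psr.

Lemma lambdaD c a b : lambda (c *: a + b) = c *: lambda a + lambda b.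
Proof.
apply: eq_by_functionals => g hg; unpack_lin.
rewrite /lambda /lambdaLR (lin_sum _ _ hg).
rewrite (sum_psrD _ _ _ (F := fun p => g (ra p.1 (Sinv p.2)))); last by solve_lin.
by rewrite_lin_rules; rewrite !(lin_sum _ _ hg).
Qed.

Lemma lambda1 : lambda 1 = 1.
Proof.
apply: eq_by_functionals => g hg; unpack_lin.
rewrite /lambda /lambdaLR (lin_sum _ _ hg).
rewrite (sum_psr1 (F := fun p => g (ra p.1 (Sinv p.2)))) /=; last by solve_lin.
by rewrite Sinv1 ra_act1.
Qed.

Lemma lambdaK : cancel lambda lambda_inv.
Proof.
move=> a; apply: eq_by_functionals => g hg; unpack_lin.
rewrite /lambda_inv /lambda /lambdaLR_inv /lambdaLR (lin_sum _ _ hg).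
rewrite -(sum_psr_sum _ (fun q => ra q.1 (Sinv q.2)) (F := fun p => g (ra p.1 p.2)));
  last by solve_lin.
transitivity (\sum_(q <- psr a) \sum_(p <- psr q.1) g (ra p.1 (Sinv q.2 * p.2))).
  apply: eq_bigr => q _.
  rewrite (sum_psr_ra _ _ (F := fun p => g (ra p.1 p.2))) /=; last by solve_lin.
  by apply: eq_bigr => p _; rewrite ra_actM.
etransitivity.
  apply: (sum_psr_coassoc a (F := fun t => g (ra t.1.1 (Sinv t.2 * t.1.2)))); solve_lin.
rewrite /= -(sum_psr_counit a (G := g)) //; apply: eq_bigr => q _.
by rewrite -(lin_sum _ _ hg) -ra_sumr antipode_invr raZr ra_act1 (linZ _ _ hg).
Qed.

Lemma lambda_invK : cancel lambda_inv lambda.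
Proof.
move=> a; apply: eq_by_functionals => g hg; unpack_lin.
rewrite /lambda_inv /lambda /lambdaLR_inv /lambdaLR (lin_sum _ _ hg).
rewrite -(sum_psr_sum _ (fun q => ra q.1 q.2) (F := fun p => g (ra p.1 (Sinv p.2))));
  last by solve_lin.
transitivity (\sum_(q <- psr a) \sum_(p <- psr q.1) g (ra p.1 (q.2 * Sinv p.2))).
  apply: eq_bigr => q _.
  rewrite (sum_psr_ra _ _ (F := fun p => g (ra p.1 (Sinv p.2)))) /=; last by solve_lin.
  by apply: eq_bigr => p _; rewrite ra_actM.
etransitivity.
  apply: (sum_psr_coassoc a (F := fun t => g (ra t.1.1 (t.2 * Sinv t.1.2)))); solve_lin.
rewrite /= -(sum_psr_counit a (G := g)) //; apply: eq_bigr => q _.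
by rewrite -(lin_sum _ _ hg) -ra_sumr antipode_invl raZr ra_act1 (linZ _ _ hg).
Qed.

Lemma ra_mul_SinvM (g : A -> k) (P Q : A) h1 h2 : lin g ->
  g (ra (P * Q) (Sinv (h1 * h2))) =
  \sum_(e <- Delta h1) \sum_(e' <- Delta h2)
     g (ra P (Sinv e'.2 * Sinv e.2) * ra Q (Sinv e'.1 * Sinv e.1)).
Proof.
move=> hg; unpack_lin.
rewrite ra_mul (lin_sum _ _ hg).
rewrite (sum_DeltaSinv _ (F := fun r => g (ra P r.1 * ra Q r.2))) /=; last by solve_lin.
rewrite (sum_DeltaM _ _ (F := fun r => g (ra P (Sinv r.2) * ra Q (Sinv r.1)))) /=;
  last by solve_lin.
by apply: eq_bigr => e _; apply: eq_bigr => e' _; rewrite !SinvM.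
Qed.

(* After coassociativity of [psr] and of [Delta], the identity
   [x_(2) S^-1(x_(1)) = eps x] cancels [b_<1>] against [S^-1] of [b_<0>_<1>]. *)
Lemma sum_psr_contract (g : A -> k) b c h x1 x2 : lin g ->
  \sum_(v <- psr b) \sum_(t <- psr v.1) \sum_(e' <- Delta t.2)
    g (ra c (v.2 * (Sinv e'.2 * Sinv x2)) * la h (ra t.1 (Sinv e'.1 * Sinv x1))) =
  \sum_(v <- psr b) g (ra c (Sinv x2) * la h (ra v.1 (Sinv v.2 * Sinv x1))).
Proof.
move=> hg; unpack_lin.
etransitivity.
  apply: (sum_psr_coassoc b (F := fun T => \sum_(e' <- Delta T.1.2)
    g (ra c (T.2 * (Sinv e'.2 * Sinv x2)) * la h (ra T.1.1 (Sinv e'.1 * Sinv x1))))).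
  solve_lin.
rewrite /=; apply: eq_bigr => v _.
etransitivity.
  apply: (sum_Delta_coassoc v.2 (F := fun T =>
    g (ra c (T.2 * (Sinv T.1.2 * Sinv x2)) * la h (ra v.1 (Sinv T.1.1 * Sinv x1))))).
  solve_lin.
rewrite /= -(sum_Delta_counitr v.2
  (G := fun z => g (ra c (Sinv x2) * la h (ra v.1 (Sinv z * Sinv x1))))) /=; last by solve_lin.
apply: eq_bigr => d _.
have hm : linmap (fun z => ra c (z * Sinv x2) * la h (ra v.1 (Sinv d.1 * Sinv x1))).
  by move=> c0 x y; rewrite mulrDl -scalerAl raDr mulrDl -scalerAl.
transitivity (\sum_(q <- Delta d.2)
   g ((fun z => ra c (z * Sinv x2) * la h (ra v.1 (Sinv d.1 * Sinv x1))) (q.2 * Sinv q.1))).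
  by apply: eq_bigr => q _; rewrite /= mulrA.
rewrite -(lin_sum _ _ hg) -(linmap_sum _ _ hm) antipode_invl /=.
by rewrite -scalerAl mul1r raZr -scalerAl (linZ _ _ hg).
Qed.

Lemma lambda_LRprod_expand (g : A -> k) a b : lin g ->
  g (lambda (LRprod la ra psl psr a b)) =
  \sum_(u <- psl a) \sum_(q <- psr u.2) \sum_(d <- Delta q.2) \sum_(v <- psr b)
     g (ra q.1 (Sinv d.2) * la u.1 (ra v.1 (Sinv v.2 * Sinv d.1))).
Proof.
move=> hg; unpack_lin.
rewrite /lambda /lambdaLR /LRprod (lin_sum _ _ hg).
rewrite -(sum_psr_sum _ (fun u => \sum_(v <- psr b) ra u.2 v.2 * la u.1 v.1)
   (F := fun p => g (ra p.1 (Sinv p.2)))); last by solve_lin.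
apply: eq_bigr => u _.
rewrite -(sum_psr_sum _ (fun v => ra u.2 v.2 * la u.1 v.1)
   (F := fun p => g (ra p.1 (Sinv p.2)))); last by solve_lin.
transitivity (\sum_(v <- psr b) \sum_(s <- psr u.2) \sum_(t <- psr v.1) \sum_(e <- Delta s.2)
   \sum_(e' <- Delta t.2)
   g (ra s.1 (v.2 * (Sinv e'.2 * Sinv e.2)) * la u.1 (ra t.1 (Sinv e'.1 * Sinv e.1)))).
  apply: eq_bigr => v _.
  rewrite (sum_psrM _ _ (F := fun p => g (ra p.1 (Sinv p.2)))) /=; last by solve_lin.
  rewrite (sum_psr_ra _ _ (F := fun s => \sum_(t <- psr (la u.1 v.1))
     g (ra (s.1 * t.1) (Sinv (s.2 * t.2))))) /=; last by solve_lin.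
  apply: eq_bigr => s _.
  rewrite (sum_psr_la _ _ (F := fun t => g (ra (ra s.1 v.2 * t.1) (Sinv (s.2 * t.2))))) /=;
    last by solve_lin.
  apply: eq_bigr => t _; rewrite ra_mul_SinvM //.
  by apply: eq_bigr => e _; apply: eq_bigr => e' _; rewrite -ra_actM -la_ra.
rewrite exchange_big; apply: eq_bigr => s _.
under eq_bigr => v _ do rewrite exchange_big.
rewrite exchange_big; apply: eq_bigr => e _.
exact: sum_psr_contract.
Qed.

Lemma Lprod_lambda_expand (g : A -> k) a b : lin g ->
  g (Lprod pi psi (lambda a) (lambda b)) =
  \sum_(u <- psl a) \sum_(q <- psr u.2) \sum_(d <- Delta q.2) \sum_(v <- psr b)
     g (ra q.1 (Sinv d.2) * la u.1 (ra v.1 (Sinv v.2 * Sinv d.1))).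
Proof.
move=> hg; unpack_lin.
rewrite /Lprod /psi /psiLR big_allpairs_dep (lin_sum _ _ hg).
under eq_bigr => u _ do rewrite (lin_sum _ _ hg).
transitivity (\sum_(u <- psl (lambda a)) \sum_(w <- psr u.2) \sum_(v <- psr b)
   g (w.1 * la u.1 (ra v.1 (Sinv v.2 * Sinv w.2)))).
  apply: eq_bigr => u _; apply: eq_bigr => w _.
  rewrite pi_seq1 /= /lambda /lambdaLR ra_suml la_sumr mulr_sumr (lin_sum _ _ hg).
  by apply: eq_bigr => v _; rewrite -ra_actM.
rewrite /lambda /lambdaLR.
rewrite -(sum_psl_sum _ (fun q => ra q.1 (Sinv q.2)) (F := fun u => \sum_(w <- psr u.2)
   \sum_(v <- psr b) g (w.1 * la u.1 (ra v.1 (Sinv v.2 * Sinv w.2))))); last by solve_lin.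
transitivity (\sum_(q <- psr a) \sum_(u <- psl q.1) \sum_(w <- psr u.2) \sum_(v <- psr b)
   g (ra w.1 (Sinv q.2) * la u.1 (ra v.1 (Sinv v.2 * Sinv w.2)))).
  apply: eq_bigr => q _.
  rewrite (sum_psl_ra _ _ (F := fun u => \sum_(w <- psr u.2)
   \sum_(v <- psr b) g (w.1 * la u.1 (ra v.1 (Sinv v.2 * Sinv w.2))))) /=; last by solve_lin.
  apply: eq_bigr => u _.
  by rewrite (sum_psr_ra _ _ (F := fun w => \sum_(v <- psr b)
     g (w.1 * la u.1 (ra v.1 (Sinv v.2 * Sinv w.2))))) /=; last by solve_lin.
etransitivity.
  apply: (sum_bicomodule a (F := fun T => \sum_(w <- psr T.1.2) \sum_(v <- psr b)
   g (ra w.1 (Sinv T.2) * la T.1.1 (ra v.1 (Sinv v.2 * Sinv w.2))))); solve_lin.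
rewrite /=; apply: eq_bigr => u _.
apply: (sum_psr_coassoc u.2 (F := fun T => \sum_(v <- psr b)
   g (ra T.1.1 (Sinv T.2) * la u.1 (ra v.1 (Sinv v.2 * Sinv T.1.2))))); solve_lin.
Qed.

Lemma lambdaM a b : lambda (LRprod la ra psl psr a b) = Lprod pi psi (lambda a) (lambda b).
Proof.
by apply: eq_by_functionals => g hg; rewrite lambda_LRprod_expand // Lprod_lambda_expand.
Qed.

End LRDatum.
End Antipode.

Theorem theorem4p7 (k : fieldType) (H A : algType k)
    (Delta : H -> seq (H * H)) (eps : H -> k) (S Sinv : H -> H)
    (la : H -> A -> A) (ra : A -> H -> A)
    (psl : A -> seq (H * A)) (psr : A -> seq (A * H)) :
  is_hopf Delta eps S ->
  cancel S Sinv -> cancel Sinv S ->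
  LR_twisting_datum Delta eps la ra psl psr ->
  let pi := piLR la ra in
  let psi := psiLR Sinv psl psr in
  let lambda := lambdaLR Sinv ra psr in
  left_twisting_datum_HHop Delta eps pi psi /\
  [/\ (forall (c : k) a b, lambda (c *: a + b) = c *: lambda a + lambda b),
      (forall a b, lambda (LRprod la ra psl psr a b) =
                   Lprod pi psi (lambda a) (lambda b)),
      lambda 1 = 1,
      cancel lambda (lambdaLR_inv ra psr) &
      cancel (lambdaLR_inv ra psr) lambda].
Proof.
move=> hopf SK SiK LRd pi psi lambda.
split; first exact: (left_twisting_datum_piLR_psiLR hopf SK SiK LRd).
split.
- exact: (lambdaD hopf SK SiK LRd).
- exact: (lambdaM hopf SK SiK LRd).
- exact: (lambda1 hopf SK SiK LRd).
- exact: (lambdaK hopf SK SiK LRd).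
- exact: (lambda_invK hopf SK SiK LRd).
Qed.
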